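(* Let $G$ be a finite group and $x\in G$. If $C_G(x)$ is a maximal centralizer in $G$, then $\beta_G(x)\cup Z(G)$ is a subgroup of $G$.
   Context: For a finite group $G$, $C_G(x)$ denotes the centralizer of $x\in G$ and $Z(G)$ the center. $\beta_G(x)=\{y\in G\mid C_G(y)=C_G(x)\}$. A centralizer $C_G(x)$ is called maximal if it is not contained in any other proper centralizer of $G$ (i.e. there is no $y\in G$ with $C_G(x)\subsetneq C_G(y)\neq G$). *)

From mathcomp Require Import all_boot all_fingroup all_solvable.
Set Implicit Arguments. Unset Strict Implicit. Unset Printing Implicit Defensive.
Local Open Scope group_scope.

Definition beta (gT : finGroupType) (G : {set gT}) (x : gT) : {set gT} :=
  [set y in G | 'C_G[y] == 'C_G[x]].

Definition maximal_centralizer (gT : finGroupType) (G : {set gT}) (x : gT) : Prop :=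
  ~ (exists2 y, y \in G & ('C_G[x] \proper 'C_G[y]) && ('C_G[y] != G)).

(* Every element of beta_G(x) or of Z(G) centralizes C_G(x), so the union lies
   in the double centralizer C_G(C_G(x)), which is a subgroup. Conversely, if s
   centralizes C_G(x) then C_G(x) is contained in C_G(s); by maximality the two
   are equal (s is in beta_G(x)) or C_G(s) = G (s is central). Hence the union
   is exactly the subgroup C_G(C_G(x)). *)

From mathcomp Require Import all_boot all_fingroup all_solvable.
Local Open Scope group_scope.

Section DoubleCentralizer.

Variables (gT : finGroupType) (G : {group gT}).

Lemma mem_cent_cent1 (x s : gT) :
  s \in G -> (s \in 'C_G('C_G[x])) = ('C_G[x] \subset 'C_G[s]).
Proof. by move=> sG; rewrite inE sG subsetI subsetIl sub_cent1. Qed.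

Lemma center_cent1E (s : gT) : s \in G -> (s \in 'Z(G)) = ('C_G[s] == G).
Proof.
by move=> sG; rewrite inE sG eqEsubset subsetIl subsetI subxx sub_cent1.
Qed.

Lemma beta_center_sub_cent_cent1 (x : gT) :
  beta G x :|: 'Z(G) \subset 'C_G('C_G[x]).
Proof.
apply/subsetP=> s /setUP[/setIdP[sG /eqP CsCx] | Zs].
  by rewrite mem_cent_cent1 // CsCx.
have sG : s \in G by case/centerP: Zs.
rewrite center_cent1E // in Zs.
by rewrite mem_cent_cent1 // (eqP Zs) subsetIl.
Qed.

Lemma cent_cent1_sub_beta_center (x : gT) :
  maximal_centralizer G x -> 'C_G('C_G[x]) \subset beta G x :|: 'Z(G).
Proof.
move=> maxCx; apply/subsetP=> s Cs.
have sG : s \in G by case/setIP: Cs.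
rewrite mem_cent_cent1 // in Cs.
rewrite in_setU center_cent1E // inE sG /=.
have [//|CsCx] := eqVneq 'C_G[s] 'C_G[x].
apply/negPn/negP=> CsG; apply: maxCx; exists s => //.
by rewrite properEneq Cs eq_sym CsCx CsG.
Qed.

Lemma beta_center_eq_cent_cent1 (x : gT) :
  maximal_centralizer G x -> beta G x :|: 'Z(G) = 'C_G('C_G[x]).
Proof.
move=> maxCx; apply/eqP; rewrite eqEsubset beta_center_sub_cent_cent1.
exact: cent_cent1_sub_beta_center.
Qed.

End DoubleCentralizer.

Theorem proposition3p2 (gT : finGroupType) (G : {group gT}) (x : gT) :
  x \in G -> maximal_centralizer G x -> group_set (beta G x :|: 'Z(G)).
Proof.
move=> _ maxCx; rewrite beta_center_eq_cent_cent1 //.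
exact: groupP.
Qed.
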